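(* Let $G$ be a group and $c\in G$. If the set $\{x\in G:x^2=c\}$ is $4$-large in $G$, then $G$ is abelian of exponent $2$, and $c=1$.
   Context: A subset $X\subseteq G$ is $k$-large in $G$ if the intersection of any $k$ left translates $g_1X\cap\dots\cap g_kX$ ($g_i\in G$) is non-empty. *)

From Stdlib Require Import Arith.

Definition is_group {G : Type} (mul : G -> G -> G) (one : G) (inv : G -> G) : Prop :=
  (forall x y z, mul x (mul y z) = mul (mul x y) z) /\
  (forall x, mul one x = x) /\ (forall x, mul x one = x) /\
  (forall x, mul (inv x) x = one) /\ (forall x, mul x (inv x) = one).

Definition in_left_translate {G : Type} (mul : G -> G -> G) (g : G) (X : G -> Prop) (x : G) : Prop :=
  exists y, X y /\ x = mul g y.

Definition k_large {G : Type} (mul : G -> G -> G) (k : nat) (X : G -> Prop) : Prop :=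
  forall g : nat -> G, exists x, forall i, i < k -> in_left_translate mul (g i) X x.

From Stdlib Require Import Arith Lia.

Set Implicit Arguments.

(* If x and a x both square to c then a x a = x, i.e. conjugation by x inverts a.
   A common point x of the translates X, a^-1 X, b^-1 X, (a b)^-1 X of the set X of
   square roots of c is thus an element whose conjugation inverts a, b and a b.  Being an automorphism, it
   sends a b to a^-1 b^-1 = (a b)^-1 = b^-1 a^-1, so a and b commute; then a is
   both inverted and fixed by x, so a^2 = 1, and finally c = x^2 = 1. *)

Section GroupFacts.

Variables (G : Type) (mul : G -> G -> G) (one : G) (inv : G -> G).
Hypothesis hG : is_group mul one inv.

Lemma mul_assoc x y z : mul x (mul y z) = mul (mul x y) z.
Proof. now destruct hG as (A & _). Qed.

Lemma mul_1_l x : mul one x = x.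
Proof. now destruct hG as (_ & L & _). Qed.

Lemma mul_1_r x : mul x one = x.
Proof. now destruct hG as (_ & _ & R & _). Qed.

Lemma mul_inv_l x : mul (inv x) x = one.
Proof. now destruct hG as (_ & _ & _ & LI & _). Qed.

Lemma mul_inv_r x : mul x (inv x) = one.
Proof. now destruct hG as (_ & _ & _ & _ & RI). Qed.

Lemma mul_cancel_l x y z : mul z x = mul z y -> x = y.
Proof.
  intro H.
  rewrite <- (mul_1_l x), <- (mul_1_l y), <- (mul_inv_l z), <- !mul_assoc, H.
  reflexivity.
Qed.

Lemma mul_cancel_r x y z : mul x z = mul y z -> x = y.
Proof.
  intro H.
  rewrite <- (mul_1_r x), <- (mul_1_r y), <- (mul_inv_r z), !mul_assoc, H.
  reflexivity.
Qed.

Lemma inv_involutive a : inv (inv a) = a.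
Proof. apply (mul_cancel_l (z := inv a)). now rewrite mul_inv_r, mul_inv_l. Qed.

Lemma inv_mul a b : inv (mul a b) = mul (inv b) (inv a).
Proof.
  apply (mul_cancel_l (z := mul a b)).
  rewrite mul_inv_r, <- mul_assoc, (mul_assoc b), mul_inv_r, mul_1_l, mul_inv_r.
  reflexivity.
Qed.

Lemma in_left_translate_inv (g x : G) (X : G -> Prop) :
  in_left_translate mul (inv g) X x -> X (mul g x).
Proof.
  intros (y & Hy & ->).
  now rewrite mul_assoc, mul_inv_r, mul_1_l.
Qed.

Lemma k_large4_common_point (X : G -> Prop) :
  k_large mul 4 X ->
  forall a0 a1 a2 a3, exists x,
    X (mul a0 x) /\ X (mul a1 x) /\ X (mul a2 x) /\ X (mul a3 x).
Proof.
  intros HX a0 a1 a2 a3.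
  destruct (HX (fun i => inv (match i with 0 => a0 | 1 => a1 | 2 => a2 | _ => a3 end)))
    as [x Hx].
  exists x.
  repeat split; apply in_left_translate_inv; [apply (Hx 0) | apply (Hx 1)
    | apply (Hx 2) | apply (Hx 3)]; lia.
Qed.

Definition conj_inverts (x a : G) : Prop := mul a x = mul x (inv a).

Lemma conj_inverts_of_square_eq a x :
  mul (mul a x) (mul a x) = mul x x -> conj_inverts x a.
Proof.
  intro H. rewrite mul_assoc in H. apply mul_cancel_r in H.
  unfold conj_inverts.
  rewrite <- H at 2. now rewrite <- !mul_assoc, mul_inv_r, mul_1_r.
Qed.

Lemma conj_inverts_mul_commute x a b :
  conj_inverts x a -> conj_inverts x b -> conj_inverts x (mul a b) ->
  mul a b = mul b a.
Proof.
  unfold conj_inverts. intros Ha Hb Hab.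
  assert (Hinv : inv (mul a b) = mul (inv a) (inv b)).
  { apply (mul_cancel_l (z := x)).
    now rewrite <- Hab, <- mul_assoc, Hb, !mul_assoc, Ha. }
  rewrite <- (inv_involutive (mul a b)), Hinv, inv_mul, !inv_involutive.
  reflexivity.
Qed.

Lemma conj_inverts_commute_involution x a :
  conj_inverts x a -> mul a x = mul x a -> mul a a = one.
Proof.
  unfold conj_inverts. intros Hinv Hcomm.
  rewrite Hcomm in Hinv. apply mul_cancel_l in Hinv.
  rewrite Hinv at 2. apply mul_inv_r.
Qed.

End GroupFacts.

Theorem theorem4p1 (G : Type) (mul : G -> G -> G) (one : G) (inv : G -> G)
  (hG : is_group mul one inv) (c : G) :
  k_large mul 4 (fun x => mul x x = c) ->
  (forall x y, mul x y = mul y x) /\ (forall x, mul x x = one) /\ c = one.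
Proof.
  intro Hlarge.
  assert (Hroot : forall a b, exists x, mul x x = c /\ conj_inverts mul inv x a /\
            conj_inverts mul inv x b /\ conj_inverts mul inv x (mul a b)).
  { intros a b.
    destruct (k_large4_common_point hG Hlarge one a b (mul a b))
      as (x & H1 & Ha & Hb & Hab).
    rewrite (mul_1_l hG) in H1.
    exists x. rewrite <- H1 in Ha, Hb, Hab.
    repeat split; auto; now apply (conj_inverts_of_square_eq hG). }
  assert (Hcomm : forall a b, mul a b = mul b a).
  { intros a b. destruct (Hroot a b) as (x & _ & Ha & Hb & Hab).
    exact (conj_inverts_mul_commute hG Ha Hb Hab). }
  assert (Hsq : forall a, mul a a = one).
  { intro a. destruct (Hroot a a) as (x & _ & Ha & _).
    exact (conj_inverts_commute_involution hG Ha (Hcomm a x)). }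
  split; [exact Hcomm | split; [exact Hsq |]].
  destruct (Hroot one one) as (x & Hx & _).
  now rewrite <- Hx.
Qed.
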